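(* For every $K>0$ there exist $\varepsilon>0$ and $C>0$ such that for all $\theta\in(0,\varepsilon)$ and all real $\delta$ with $|\delta|\le K\theta$, \[\big|f_0(\theta+\delta)-f_0(\theta)-f_0'(0)\,\delta\big|\le C\,\theta|\delta|,\qquad \big|j_0(\theta+\delta)-j_0(\theta)\big|\le C|\delta|.\] Moreover $f_0(0)=\ln 4$, $\exp(f_0'(0))=e/3$ and $j_0(0)=0$.
   Context: Define $\lambda:[0,\infty)\to(0,1/4]$ by $\lambda(0)=1/4$ and, for $\theta>0$, $\lambda(\theta)$ is the unique $\lambda\in(0,1/4)$ with $-1+\frac{\operatorname{artanh}(\sqrt{1-4\lambda})}{\sqrt{1-4\lambda}}=\theta$. For $\theta>0$ set $f(\theta)=-\ln\lambda(\theta)-2\theta-\theta\ln(1-4\lambda(\theta))$ and $j(\theta)=-\tfrac12\ln(1-4(\theta+1)\lambda(\theta))+\tfrac12\ln 2$, and $f_0(\theta)=f(\theta)+\theta\ln\theta$, $j_0(\theta)=j(\theta)+\tfrac12\ln\theta$. The functions $f_0,j_0$ are real-analytic on $(0,\infty)$ and extend to real-analytic functions on an open neighbourhood of $0$; $f_0,j_0$ denote these extensions. *)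

From Stdlib Require Import Reals Lra ClassicalEpsilon.
From Coquelicot Require Import Coquelicot.
Open Scope R_scope.

Definition artanh (x : R) : R := / 2 * ln ((1 + x) / (1 - x)).

Definition theta_of_lam (l : R) : R :=
  -1 + artanh (sqrt (1 - 4 * l)) / sqrt (1 - 4 * l).

(* lambda(0) = 1/4; for theta > 0 the (unique) l in (0,1/4) with theta_of_lam l = theta.
   (Values for theta < 0 are irrelevant and arbitrary.) *)
Definition lam (t : R) : R :=
  if Req_EM_T t 0 then / 4
  else epsilon (inhabits 0) (fun l => 0 < l < / 4 /\ theta_of_lam l = t).

Definition f (t : R) : R := - ln (lam t) - 2 * t - t * ln (1 - 4 * lam t).
Definition j (t : R) : R := - / 2 * ln (1 - 4 * (t + 1) * lam t) + / 2 * ln 2.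
Definition f0 (t : R) : R := f t + t * ln t.
Definition j0 (t : R) : R := j t + / 2 * ln t.

Definition analytic_on (U : R -> Prop) (g : R -> R) : Prop :=
  forall x, U x -> exists (a : nat -> R) (rho : R), 0 < rho /\
    forall y, Rabs (y - x) < rho -> is_pseries a (y - x) (g y).

(* Writing s = sqrt (1 - 4 lambda), the bounds s + s^3/3 <= artanh s <= s + s^3/(3(1 - s^2))
   give s^2/3 <= theta <= s^2/(3(1 - s^2)), hence 1 - 4 lambda(theta) = 3 theta + O(theta^2).
   Substituting into the definitions yields f0(theta) = ln 4 + (1 - ln 3) theta + O(theta^2) and
   j0(theta) = O(theta) as theta -> 0+.  An analytic function G has a bounded second derivative
   near 0, so |G y - G x - G'(0) (y - x)| <= M max(|x|,|y|) |y - x| there.  At x = 0 this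
   identifies F0(0), F0'(0) and J0(0) with the one-sided expansions; at x = theta,
   y = theta + delta it gives both increment bounds. *)

From Pilot Require Import Defs.
From Stdlib Require Import Reals Lra ClassicalEpsilon.
From Coquelicot Require Import Coquelicot.
Open Scope R_scope.

(** * Local estimates for analytic functions *)

Lemma Rabs_sub_le_of_is_derive (h dh : R -> R) x y B :
  (forall z, Rmin x y <= z <= Rmax x y -> is_derive h z (dh z)) ->
  (forall z, Rmin x y <= z <= Rmax x y -> Rabs (dh z) <= B) ->
  Rabs (h y - h x) <= B * Rabs (y - x).
Proof.
  intros Hd Hb.
  destruct (MVT_abs h dh x y) as [c [E Hc]].
  - intros c Hc. apply is_derive_Reals, Hd, Hc.
  - rewrite E. apply Rmult_le_compat_r; [apply Rabs_pos | apply Hb, Hc].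
Qed.

Lemma Rabs_le_Rmax_of_between x y z :
  Rmin x y <= z <= Rmax x y -> Rabs z <= Rmax (Rabs x) (Rabs y).
Proof.
  unfold Rmin, Rmax, Rabs. intros Hz.
  repeat (destruct Rle_dec || destruct Rcase_abs); lra.
Qed.

Lemma Rabs_le_of_between r x y z : Rabs x <= r -> Rabs y <= r ->
  Rmin x y <= z <= Rmax x y -> Rabs z <= r.
Proof.
  intros Hx Hy Hz. apply Rabs_le_Rmax_of_between in Hz.
  unfold Rmax in Hz. destruct Rle_dec; lra.
Qed.

Lemma Rabs_bounded_of_continuous (g : R -> R) a b : a <= b ->
  (forall c, a <= c <= b -> continuity_pt g c) ->
  exists M, 0 <= M /\ forall c, a <= c <= b -> Rabs (g c) <= M.
Proof.
  intros Hab Hc.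
  destruct (continuity_ab_maj (fun c => Rabs (g c)) a b Hab) as [m [Hm _]].
  - intros c Hc'. apply (continuity_pt_comp g Rabs); [apply Hc, Hc' | apply Rcontinuity_abs].
  - exists (Rabs (g m)). split; [apply Rabs_pos | exact Hm].
Qed.

Lemma CV_radius_ge_of_ex_pseries (a : nat -> R) x :
  ex_pseries a x -> Rbar_le (Rabs x) (CV_radius a).
Proof.
  intros Hx. apply Rbar_not_lt_le. intros Hlt.
  apply (CV_disk_outside a x Hlt), ex_series_lim_0, ex_pseries_R, Hx.
Qed.

Section Linearization.

Variables (g g1 g2 : R -> R) (del M : R).
Hypothesis g_deriv : forall z, Rabs z <= del -> is_derive g z (g1 z).
Hypothesis g1_deriv : forall z, Rabs z <= del -> is_derive g1 z (g2 z).
Hypothesis g2_bounded : forall z, Rabs z <= del -> Rabs (g2 z) <= M.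

Lemma Rabs_g1_sub_le z : Rabs z <= del -> Rabs (g1 z - g1 0) <= M * Rabs z.
Proof.
  intros Hz. rewrite <- (Rminus_0_r z) at 2.
  assert (Hseg : forall w, Rmin 0 z <= w <= Rmax 0 z -> Rabs w <= del).
  { intros w Hw. apply (Rabs_le_of_between del 0 z w); [| exact Hz | exact Hw].
    rewrite Rabs_R0. pose proof (Rabs_pos z). lra. }
  apply (Rabs_sub_le_of_is_derive g1 g2); intros w Hw; auto.
Qed.

Lemma linearization_error_le x y : Rabs x <= del -> Rabs y <= del ->
  Rabs (g y - g x - g1 0 * (y - x)) <= M * Rmax (Rabs x) (Rabs y) * Rabs (y - x).
Proof.
  intros Hx Hy.
  set (m := Rmax (Rabs x) (Rabs y)).
  assert (HM : 0 <= M).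
  { apply Rle_trans with (Rabs (g2 0)); [apply Rabs_pos | apply g2_bounded].
    rewrite Rabs_R0. pose proof (Rabs_pos x). lra. }
  assert (Hseg : forall z, Rmin x y <= z <= Rmax x y -> Rabs z <= m /\ Rabs z <= del).
  { intros z Hz.
    split; [apply Rabs_le_Rmax_of_between | apply (Rabs_le_of_between del x y)]; auto. }
  replace (g y - g x - g1 0 * (y - x)) with ((g y - g1 0 * y) - (g x - g1 0 * x)) by ring.
  apply (Rabs_sub_le_of_is_derive (fun z => g z - g1 0 * z) (fun z => g1 z - g1 0)).
  - intros z Hz.
    assert (H := is_derive_minus g (fun z => g1 0 * z) z (g1 z) (g1 0 * 1)
                   (g_deriv z (proj2 (Hseg z Hz))) (is_derive_scal _ _ _ _ (is_derive_id z))).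
    unfold minus, plus, opp in H; simpl in H. rewrite Rmult_1_r in H. exact H.
  - intros z Hz. destruct (Hseg z Hz) as [Hzm Hzd].
    eapply Rle_trans; [apply Rabs_g1_sub_le, Hzd |]. apply Rmult_le_compat_l; assumption.
Qed.

End Linearization.

Definition linearization_bound (G : R -> R) (del M : R) : Prop :=
  forall x y, Rabs x <= del -> Rabs y <= del ->
    Rabs (G y - G x - Derive G 0 * (y - x)) <= M * Rmax (Rabs x) (Rabs y) * Rabs (y - x).

Lemma pseries_linearization_bound (G : R -> R) (a : nat -> R) rho : 0 < rho ->
  (forall y, Rabs y < rho -> is_pseries a y (G y)) ->
  exists del M, 0 < del /\ 0 <= M /\ linearization_bound G del M.
Proof.
  intros Hrho HG.
  set (del := rho / 2).
  assert (HGa : forall y, Rabs y < rho -> G y = PSeries a y).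
  { intros y Hy. symmetry. apply is_pseries_unique, HG, Hy. }
  (* Convergence at 3 rho / 4 puts [-del, del] strictly inside the disc of convergence. *)
  assert (Hrad : forall z, Rabs z <= del -> Rbar_lt (Rabs z) (CV_radius a)).
  { intros z Hz.
    assert (H : Rbar_le (Rabs (3 * rho / 4)) (CV_radius a)).
    { apply CV_radius_ge_of_ex_pseries. exists (G (3 * rho / 4)).
      apply HG. rewrite Rabs_pos_eq; lra. }
    rewrite Rabs_pos_eq in H by lra. unfold del in Hz.
    destruct (CV_radius a); simpl in *; lra. }
  set (a1 := PS_derive a). set (a2 := PS_derive a1).
  assert (Hrad2 : forall z, Rabs z <= del -> Rbar_lt (Rabs z) (CV_radius a2)).
  { intros z Hz. unfold a2, a1. rewrite !CV_radius_derive. auto. }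
  destruct (Rabs_bounded_of_continuous (PSeries a2) (- del) del) as [M [HM0 HM]].
  { unfold del. lra. }
  { intros c Hc. apply PSeries_continuity, Hrad2, Rabs_le_between, Hc. }
  exists del, M. split; [unfold del; lra | split; [exact HM0 |]]. intros x y Hx Hy.
  assert (HD : Derive G 0 = PSeries a1 0).
  { rewrite (Derive_ext_loc G (PSeries a)).
    - apply Derive_PSeries, Hrad. rewrite Rabs_R0. unfold del. lra.
    - exists (mkposreal rho Hrho). intros t Ht. apply HGa.
      change (Rabs (t - 0) < rho) in Ht. rewrite Rminus_0_r in Ht. exact Ht. }
  rewrite HD, (HGa x), (HGa y) by (unfold del in *; lra).
  apply (linearization_error_le (PSeries a) (PSeries a1) (PSeries a2) del); auto.
  - intros z Hz. apply is_derive_PSeries, Hrad, Hz.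
  - intros z Hz. apply is_derive_PSeries. unfold a1. rewrite CV_radius_derive. auto.
  - intros z Hz. apply HM, Rabs_le_between, Hz.
Qed.

Lemma analytic_on_linearization_bound (U : R -> Prop) (G : R -> R) :
  analytic_on U G -> U 0 ->
  exists del M, 0 < del /\ 0 <= M /\ linearization_bound G del M.
Proof.
  intros HG H0. destruct (HG 0 H0) as [a [rho [Hrho Ha]]].
  apply (pseries_linearization_bound G a rho Hrho).
  intros y Hy. specialize (Ha y). rewrite Rminus_0_r in Ha. apply Ha, Hy.
Qed.

Lemma linearization_bound_at_0 G del M : linearization_bound G del M ->
  forall t, 0 < t <= del -> Rabs (G t - G 0 - Derive G 0 * t) <= M * t ^ 2.
Proof.
  intros HG t Ht. specialize (HG 0 t).
  rewrite Rabs_R0, !Rminus_0_r, Rabs_pos_eq, Rmax_right in HG by lra.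
  replace (M * t ^ 2) with (M * t * t) by ring. apply HG; rewrite ?Rabs_R0, ?Rabs_pos_eq; lra.
Qed.

Lemma linearization_bound_lipschitz G del M : 0 <= M -> linearization_bound G del M ->
  forall x y, Rabs x <= del -> Rabs y <= del ->
  Rabs (G y - G x) <= (Rabs (Derive G 0) + M * del) * Rabs (y - x).
Proof.
  intros HM HG x y Hx Hy.
  assert (Hm : Rmax (Rabs x) (Rabs y) <= del) by (apply Rmax_lub; assumption).
  replace (G y - G x) with ((G y - G x - Derive G 0 * (y - x)) + Derive G 0 * (y - x)) by ring.
  eapply Rle_trans; [apply Rabs_triang |]. rewrite Rabs_mult.
  assert (M * Rmax (Rabs x) (Rabs y) * Rabs (y - x) <= M * del * Rabs (y - x)).
  { apply Rmult_le_compat_r; [apply Rabs_pos | apply Rmult_le_compat_l; assumption]. }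
  pose proof (HG x y Hx Hy). lra.
Qed.

Lemma linearization_increment_bounds G del M : 0 < del -> 0 <= M ->
  linearization_bound G del M -> forall K, 0 < K -> exists eps C, 0 < eps /\ 0 < C /\
    forall th d, 0 < th < eps -> Rabs d <= K * th ->
      Rabs (G (th + d) - G th - Derive G 0 * d) <= C * th * Rabs d /\
      Rabs (G (th + d) - G th) <= C * Rabs d.
Proof.
  intros Hdel HM HG K HK.
  exists (del / (K + 1)), (M * (K + 1) + Rabs (Derive G 0) + M * del + 1).
  pose proof (Rabs_pos (Derive G 0)).
  split; [apply Rdiv_lt_0_compat; lra | split; [nra |]].
  intros th d Hth Hd.
  assert (Hth' : (K + 1) * th < del).
  { apply Rmult_lt_reg_r with (/ (K + 1)); [apply Rinv_0_lt_compat; lra |].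
    replace ((K + 1) * th * / (K + 1)) with th by (field; lra). lra. }
  assert (Hx : Rabs th <= (K + 1) * th) by (rewrite Rabs_pos_eq; nra).
  assert (Hy : Rabs (th + d) <= (K + 1) * th).
  { eapply Rle_trans; [apply Rabs_triang |]. rewrite Rabs_pos_eq; lra. }
  assert (Hm : Rmax (Rabs th) (Rabs (th + d)) <= (K + 1) * th) by (apply Rmax_lub; assumption).
  pose proof (HG th (th + d) ltac:(lra) ltac:(lra)) as Hlin.
  pose proof (linearization_bound_lipschitz G del M HM HG th (th + d) ltac:(lra) ltac:(lra))
    as Hlip.
  replace (th + d - th) with d in Hlin, Hlip by ring.
  pose proof (Rabs_pos d). pose proof (Rmult_le_pos M (K + 1) HM ltac:(lra)).
  split; [eapply Rle_trans; [exact Hlin |] | eapply Rle_trans; [exact Hlip |]].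
  - assert (M * Rmax (Rabs th) (Rabs (th + d)) * Rabs d <= M * ((K + 1) * th) * Rabs d).
    { apply Rmult_le_compat_r; [| apply Rmult_le_compat_l]; assumption. }
    assert (0 <= (Rabs (Derive G 0) + M * del + 1) * th * Rabs d).
    { apply Rmult_le_pos; [apply Rmult_le_pos |]; nra. }
    replace ((M * (K + 1) + Rabs (Derive G 0) + M * del + 1) * th * Rabs d)
      with (M * ((K + 1) * th) * Rabs d + (Rabs (Derive G 0) + M * del + 1) * th * Rabs d)
      by ring.
    lra.
  - apply Rmult_le_compat_r; lra.
Qed.

Lemma eq_0_of_Rabs_le_mul z C eta : 0 < eta ->
  (forall t, 0 < t < eta -> Rabs z <= C * t) -> z = 0.
Proof.
  intros Heta H. destruct (Req_dec z 0) as [| Hz]; [assumption | exfalso].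
  pose proof (Rabs_pos_lt z Hz). pose proof (Rabs_pos C). pose proof (Rle_abs C).
  set (t := Rmin (eta / 2) (Rabs z / (2 * (Rabs C + 1)))).
  assert (Ht0 : 0 < t) by (apply Rmin_glb_lt; [lra | apply Rdiv_lt_0_compat; lra]).
  assert (Ht1 : t <= eta / 2) by apply Rmin_l.
  assert (Ht2 : t * (2 * (Rabs C + 1)) <= Rabs z).
  { apply Rmult_le_reg_r with (/ (2 * (Rabs C + 1))); [apply Rinv_0_lt_compat; lra |].
    replace (t * (2 * (Rabs C + 1)) * / (2 * (Rabs C + 1))) with t by (field; lra). apply Rmin_r. }
  specialize (H t ltac:(lra)). nra.
Qed.

Lemma right_expansion0_unique (g : R -> R) a b A B eta : 0 < eta ->
  (forall t, 0 < t < eta -> Rabs (g t - a) <= A * t) ->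
  (forall t, 0 < t < eta -> Rabs (g t - b) <= B * t) -> a = b.
Proof.
  intros Heta Ha Hb. apply Rminus_diag_uniq, (eq_0_of_Rabs_le_mul _ (A + B) eta Heta).
  intros t Ht. replace (a - b) with ((g t - b) + - (g t - a)) by ring.
  eapply Rle_trans; [apply Rabs_triang |]. rewrite Rabs_Ropp.
  specialize (Ha t Ht). specialize (Hb t Ht). lra.
Qed.

Lemma right_expansion1_unique (g : R -> R) a0 a1 b0 b1 A B eta : 0 < eta ->
  (forall t, 0 < t < eta -> Rabs (g t - a0 - a1 * t) <= A * t ^ 2) ->
  (forall t, 0 < t < eta -> Rabs (g t - b0 - b1 * t) <= B * t ^ 2) -> a0 = b0 /\ a1 = b1.
Proof.
  intros Heta Ha Hb.
  assert (Hzero : forall c0 c1 C,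
            (forall t, 0 < t < eta -> Rabs (g t - c0 - c1 * t) <= C * t ^ 2) ->
            forall t, 0 < t < eta -> Rabs (g t - c0) <= (C * eta + Rabs c1) * t).
  { intros c0 c1 C Hc t Ht. specialize (Hc t Ht).
    replace (g t - c0) with ((g t - c0 - c1 * t) + c1 * t) by ring.
    eapply Rle_trans; [apply Rabs_triang |]. rewrite Rabs_mult, (Rabs_pos_eq t) by lra.
    assert (0 <= C) by (pose proof (Rabs_pos (g t - c0 - c1 * t)); pose proof (pow_lt t 2); nra).
    assert (C * t * t <= C * eta * t)
      by (apply Rmult_le_compat_r; [| apply Rmult_le_compat_l]; lra).
    lra. }
  assert (H0 : a0 = b0)
    by exact (right_expansion0_unique g a0 b0 _ _ eta Heta (Hzero _ _ _ Ha) (Hzero _ _ _ Hb)).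
  split; [exact H0 |]. subst b0.
  apply Rminus_diag_uniq, (eq_0_of_Rabs_le_mul _ (A + B) eta Heta).
  intros t Ht. apply Rmult_le_reg_r with t; [lra |].
  rewrite <- (Rabs_pos_eq t) at 1 by lra. rewrite <- Rabs_mult.
  replace ((a1 - b1) * t) with ((g t - a0 - b1 * t) + - (g t - a0 - a1 * t)) by ring.
  eapply Rle_trans; [apply Rabs_triang |]. rewrite Rabs_Ropp.
  specialize (Ha t Ht). specialize (Hb t Ht). nra.
Qed.

(** * Expansions of [f0] and [j0] at [0] *)

Lemma le_of_is_derive_nonneg (h dh : R -> R) a b : a <= b ->
  (forall c, a <= c <= b -> is_derive h c (dh c)) ->
  (forall c, a <= c <= b -> 0 <= dh c) -> h a <= h b.
Proof.
  intros [Hab | ->] Hd Hp; [| lra].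
  destruct (MVT_cor2 h dh a b Hab) as [c [E Hc]].
  - intros c Hc. apply is_derive_Reals, Hd, Hc.
  - assert (0 <= dh c) by (apply Hp; lra). nra.
Qed.

Lemma artanh_0 : artanh 0 = 0.
Proof. unfold artanh. replace ((1 + 0) / (1 - 0)) with 1 by field. rewrite ln_1. ring. Qed.

Lemma artanh_ge s : 0 <= s < 1 -> s + s ^ 3 / 3 <= artanh s.
Proof.
  intros Hs.
  enough (0 <= artanh s - s - s ^ 3 / 3) by lra.
  replace 0 with (artanh 0 - 0 - 0 ^ 3 / 3) at 1 by (rewrite artanh_0; field).
  apply (le_of_is_derive_nonneg (fun x => artanh x - x - x ^ 3 / 3)
           (fun x => x ^ 4 / (1 - x ^ 2))); [lra | intros c Hc ..].
  - unfold artanh. auto_derive.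
    + repeat split; try lra. apply Rdiv_lt_0_compat; lra.
    + field. repeat split; try lra. nra.
  - apply Rdiv_le_0_compat; [apply pow_le; lra | nra].
Qed.

Lemma artanh_le s : 0 <= s < 1 -> artanh s <= s + s ^ 3 / (3 * (1 - s ^ 2)).
Proof.
  intros Hs.
  enough (0 <= s + s ^ 3 / (3 * (1 - s ^ 2)) - artanh s) by lra.
  replace 0 with (0 + 0 ^ 3 / (3 * (1 - 0 ^ 2)) - artanh 0) at 1
    by (rewrite artanh_0; field).
  apply (le_of_is_derive_nonneg (fun x => x + x ^ 3 / (3 * (1 - x ^ 2)) - artanh x)
           (fun x => 2 * x ^ 4 / (3 * (1 - x ^ 2) ^ 2))); [lra | intros c Hc ..].
  - unfold artanh. auto_derive.
    + repeat split; try lra; [nra | apply Rdiv_lt_0_compat; lra].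
    + field. repeat split; try lra. nra.
  - apply Rdiv_le_0_compat; [apply Rmult_le_pos; [lra | apply pow_le; lra] |].
    assert (0 < 1 - c ^ 2) by nra. apply Rmult_lt_0_compat; [lra | apply pow_lt; lra].
Qed.

Definition theta_of_root (s : R) : R := -1 + artanh s / s.

Lemma theta_of_lam_root l : theta_of_lam l = theta_of_root (sqrt (1 - 4 * l)).
Proof. reflexivity. Qed.

Lemma theta_of_root_bounds s : 0 < s < 1 ->
  s ^ 2 / 3 <= theta_of_root s <= s ^ 2 / (3 * (1 - s ^ 2)).
Proof.
  intros Hs. unfold theta_of_root.
  pose proof (artanh_ge s ltac:(lra)). pose proof (artanh_le s ltac:(lra)).
  replace (-1 + artanh s / s) with ((artanh s - s) / s) by (field; lra).
  assert (0 < 1 - s ^ 2) by nra.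
  split; apply Rmult_le_reg_r with s; try lra;
    replace ((artanh s - s) / s * s) with (artanh s - s) by (field; lra).
  - replace (s ^ 2 / 3 * s) with (s ^ 3 / 3) by field. lra.
  - replace (s ^ 2 / (3 * (1 - s ^ 2)) * s) with (s ^ 3 / (3 * (1 - s ^ 2))) by (field; lra). lra.
Qed.

Lemma theta_of_root_continuous s : 0 < s < 1 -> continuity_pt theta_of_root s.
Proof.
  intros Hs. apply continuity_pt_filterlim, (ex_derive_continuous (V := R_NormedModule)).
  unfold theta_of_root, artanh. auto_derive.
  repeat split; try lra. apply Rdiv_lt_0_compat; lra.
Qed.

Lemma theta_of_root_surj t : 0 < t < / 12 -> exists s, 0 < s < 1 /\ theta_of_root s = t.
Proof.
  intros Ht.
  destruct (Ranalysis5.IVT_interv (fun s => theta_of_root s - t) t (/ 2)) as [s [Hs E]].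
  - intros c Hc. apply continuity_pt_minus; [apply theta_of_root_continuous; lra |].
    apply continuity_pt_const. intros x y. reflexivity.
  - lra.
  - destruct (theta_of_root_bounds t) as [_ H]; [lra |].
    enough (t ^ 2 / (3 * (1 - t ^ 2)) < t) by lra.
    apply Rmult_lt_reg_r with (3 * (1 - t ^ 2)); [nra |].
    replace (t ^ 2 / (3 * (1 - t ^ 2)) * (3 * (1 - t ^ 2))) with (t ^ 2) by (field; nra). nra.
  - destruct (theta_of_root_bounds (/ 2)) as [H _]; lra.
  - exists s. split; lra.
Qed.

Lemma lam_spec t : 0 < t < / 12 -> 0 < lam t < / 4 /\ theta_of_lam (lam t) = t.
Proof.
  intros Ht. unfold lam. destruct (Req_EM_T t 0) as [|_]; [lra |].
  apply epsilon_spec.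
  destruct (theta_of_root_surj t Ht) as [s [Hs E]].
  exists ((1 - s ^ 2) / 4). split; [nra |].
  rewrite theta_of_lam_root, <- E. f_equal.
  replace (1 - 4 * ((1 - s ^ 2) / 4)) with (s ^ 2) by field. apply sqrt_pow2. lra.
Qed.

Lemma one_sub_4lam_bounds t : 0 < t < / 12 ->
  0 < 1 - 4 * lam t < 1 /\ 3 * t * (4 * lam t) <= 1 - 4 * lam t <= 3 * t.
Proof.
  intros Ht. destruct (lam_spec t Ht) as [Hl E].
  set (U := 1 - 4 * lam t) in *.
  assert (HU : 0 < U < 1) by (unfold U; lra).
  assert (Hs : 0 < sqrt U < 1).
  { split; [apply sqrt_lt_R0; lra |]. rewrite <- sqrt_1. apply sqrt_lt_1_alt. lra. }
  rewrite theta_of_lam_root in E. fold U in E.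
  destruct (theta_of_root_bounds (sqrt U) Hs) as [B1 B2].
  rewrite E, pow2_sqrt in B1, B2 by lra.
  split; [exact HU | split; [| lra]].
  replace (4 * lam t) with (1 - U) by (unfold U; ring).
  apply Rmult_le_compat_r with (r := 3 * (1 - U)) in B2; [| lra].
  replace (U / (3 * (1 - U)) * (3 * (1 - U))) with U in B2 by (field; lra). lra.
Qed.

Lemma ln_le_sub_1 y : 0 < y -> ln y <= y - 1.
Proof.
  intros Hy. pose proof (exp_ineq1_le (ln y)) as H. rewrite exp_ln in H by exact Hy. lra.
Qed.

Lemma one_sub_inv_le_ln y : 0 < y -> 1 - / y <= ln y.
Proof.
  intros Hy. pose proof (ln_le_sub_1 (/ y) (Rinv_0_lt_compat y Hy)) as H.
  rewrite ln_Rinv in H by exact Hy. lra.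
Qed.

Lemma ln_4lam_approx t : 0 < t < / 12 -> Rabs (ln (4 * lam t) + 3 * t) <= 12 * t ^ 2.
Proof.
  intros Ht. destruct (one_sub_4lam_bounds t Ht) as [Hp [B1 B2]].
  set (p := 4 * lam t) in *.
  pose proof (ln_le_sub_1 p ltac:(lra)) as Hle.
  pose proof (one_sub_inv_le_ln p ltac:(lra)) as Hge.
  set (v := / p) in Hge.
  assert (Hv : v * p = 1) by (unfold v; field; lra).
  assert (Hv43 : v <= 4 / 3) by nra.
  apply Rabs_le. split; nra.
Qed.

Lemma f0_expansion t : 0 < t < / 12 -> Rabs (f0 t - ln 4 - (1 - ln 3) * t) <= 16 * t ^ 2.
Proof.
  intros Ht. destruct (one_sub_4lam_bounds t Ht) as [Hp [B1 B2]].
  pose proof (ln_4lam_approx t Ht) as HL. apply Rabs_le_between in HL.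
  set (p := 4 * lam t) in *.
  set (y := (1 - p) / (3 * t)).
  assert (Ey : 1 - p = 3 * t * y) by (unfold y; field; lra).
  assert (Hy : p <= y <= 1) by nra.
  assert (Hlny : ln p <= ln y <= 0).
  { rewrite <- ln_1. split; apply ln_le; lra. }
  assert (E : f0 t - ln 4 - (1 - ln 3) * t = - (ln p + 3 * t) - t * ln y).
  { unfold f0, Defs.f. replace (lam t) with (p / 4) by (unfold p; field).
    replace (1 - 4 * (p / 4)) with (3 * t * y) by (rewrite <- Ey; field).
    rewrite ln_div, !ln_mult by lra. ring. }
  rewrite E. apply Rabs_le. split; nra.
Qed.

Lemma j0_small t : 0 < t < / 12 -> Rabs (j0 t) <= 2 * t.
Proof.
  intros Ht. destruct (one_sub_4lam_bounds t Ht) as [Hp [B1 B2]].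
  pose proof (ln_4lam_approx t Ht) as HL. apply Rabs_le_between in HL.
  set (p := 4 * lam t) in *.
  set (y := (1 - (t + 1) * p) / (2 * t)).
  assert (Ey : 1 - (t + 1) * p = 2 * t * y) by (unfold y; field; lra).
  assert (Hy : p <= y <= 1 + 3 * t / 2) by nra.
  assert (Hlny : ln p <= ln y <= 3 * t / 2).
  { split; [apply ln_le; lra |]. pose proof (ln_le_sub_1 y ltac:(lra)). lra. }
  assert (E : j0 t = - / 2 * ln y).
  { unfold j0, Defs.j.
    replace (1 - 4 * (t + 1) * lam t) with (2 * t * y) by (rewrite <- Ey; unfold p; ring).
    rewrite !ln_mult by lra. ring. }
  rewrite E. apply Rabs_le. split; nra.
Qed.

Lemma f0_extension_at_0 (F0 : R -> R) del M : 0 < del -> linearization_bound F0 del M ->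
  (forall t, 0 < t -> F0 t = f0 t) -> F0 0 = ln 4 /\ Derive F0 0 = 1 - ln 3.
Proof.
  intros Hdel LF EF.
  assert (Ht : forall t, 0 < t < Rmin del (/ 12) -> 0 < t <= del /\ 0 < t < / 12).
  { intros t Ht. pose proof (Rmin_l del (/ 12)). pose proof (Rmin_r del (/ 12)). lra. }
  apply (right_expansion1_unique F0 _ _ _ _ M 16 (Rmin del (/ 12))).
  - apply Rmin_glb_lt; lra.
  - intros t Ht'. apply (linearization_bound_at_0 F0 del M LF), Ht, Ht'.
  - intros t Ht'. rewrite EF by (apply Ht in Ht'; lra). apply f0_expansion, Ht, Ht'.
Qed.

Lemma j0_extension_at_0 (J0 : R -> R) del M : 0 < del -> 0 <= M ->
  linearization_bound J0 del M -> (forall t, 0 < t -> J0 t = j0 t) -> J0 0 = 0.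
Proof.
  intros Hdel HM LJ EJ.
  assert (Ht : forall t, 0 < t < Rmin del (/ 12) -> 0 < t <= del /\ 0 < t < / 12).
  { intros t Ht. pose proof (Rmin_l del (/ 12)). pose proof (Rmin_r del (/ 12)). lra. }
  apply (right_expansion0_unique J0 _ _ (Rabs (Derive J0 0) + M * del) 2 (Rmin del (/ 12)));
    [apply Rmin_glb_lt; lra | intros t Ht'; destruct (Ht t Ht') as [Ht1 Ht2] ..].
  - rewrite <- (Rabs_pos_eq t) at 2 by lra. rewrite <- (Rminus_0_r t) at 2.
    apply (linearization_bound_lipschitz J0 del M HM LJ); rewrite ?Rabs_R0, ?Rabs_pos_eq; lra.
  - rewrite Rminus_0_r, EJ by lra. apply j0_small, Ht2.
Qed.

Theorem lemma1 (r : R) (F0 J0 : R -> R) :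
  0 < r ->
  analytic_on (fun x => - r < x) F0 ->
  analytic_on (fun x => - r < x) J0 ->
  (forall t, 0 < t -> F0 t = f0 t) ->
  (forall t, 0 < t -> J0 t = j0 t) ->
  (forall K, 0 < K -> exists eps C, 0 < eps /\ 0 < C /\
     forall th d, 0 < th < eps -> Rabs d <= K * th ->
       Rabs (F0 (th + d) - F0 th - Derive F0 0 * d) <= C * th * Rabs d /\
       Rabs (J0 (th + d) - J0 th) <= C * Rabs d) /\
  F0 0 = ln 4 /\ exp (Derive F0 0) = exp 1 / 3 /\ J0 0 = 0.
Proof.
  intros Hr HF HJ EF EJ.
  destruct (analytic_on_linearization_bound _ F0 HF ltac:(lra)) as [dF [MF [HdF [HMF LF]]]].
  destruct (analytic_on_linearization_bound _ J0 HJ ltac:(lra)) as [dJ [MJ [HdJ [HMJ LJ]]]].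
  destruct (f0_extension_at_0 F0 dF MF HdF LF EF) as [HF0 HDF].
  pose proof (j0_extension_at_0 J0 dJ MJ HdJ HMJ LJ EJ) as HJ0.
  split; [| split; [exact HF0 | split; [| exact HJ0]]].
  - intros K HK.
    destruct (linearization_increment_bounds F0 dF MF HdF HMF LF K HK) as [eF [CF [HeF [HCF BF]]]].
    destruct (linearization_increment_bounds J0 dJ MJ HdJ HMJ LJ K HK) as [eJ [CJ [HeJ [HCJ BJ]]]].
    exists (Rmin eF eJ), (CF + CJ).
    split; [apply Rmin_glb_lt; assumption | split; [lra |]].
    intros th d Hth Hd.
    pose proof (Rmin_l eF eJ). pose proof (Rmin_r eF eJ). pose proof (Rabs_pos d).
    destruct (BF th d ltac:(lra) Hd) as [BF1 _]. destruct (BJ th d ltac:(lra) Hd) as [_ BJ2].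
    split; [eapply Rle_trans; [exact BF1 |] | eapply Rle_trans; [exact BJ2 |]];
      repeat apply Rmult_le_compat_r; lra.
  - rewrite HDF. unfold Rminus. rewrite exp_plus, exp_Ropp, exp_ln by lra. field.
Qed.
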